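(* For integers $n,k\geqslant 1$, let $\mathfrak{A}_{n,k}$ be the set of words $\omega=(\omega_1,\dots,\omega_n)$ of length $n$ on the alphabet $\{1,\dots,k\}$ such that $\omega$ avoids the pattern $010$, every letter of $\{1,\dots,k\}$ occurs in $\omega$, and $\omega_1=k$. Let $\mathfrak{a}_{n,k}=\#\mathfrak{A}_{n,k}$. Then for all $n,k\geqslant 1$, $$\mathfrak{a}_{n,k}=\genfrac{[}{]}{0pt}{}{n}{n+1-k}.$$
   Context: $\genfrac{[}{]}{0pt}{}{n}{j}$ denotes the unsigned Stirling number of the first kind (the number of permutations of $n$ elements with exactly $j$ cycles), with the convention that it is $0$ when $j\leqslant 0$ and $n\geqslant 1$, or when $j>n$. A word (sequence) $\omega=(\omega_1,\dots,\omega_n)$ of integers contains a pattern $p=(p_1,\dots,p_k)$ if some subsequence $(\omega_{i_1},\dots,\omega_{i_k})$ with $i_1<\dots<i_k$ is order-isomorphic to $p$ (i.e. $\omega_{i_a}<\omega_{i_b}$ iff $p_a<p_b$ and $\omega_{i_a}=\omega_{i_b}$ iff $p_a=p_b$); otherwise $\omega$ avoids $p$. Thus avoiding $010$ means there are no $i<j<l$ with $\omega_i=\omega_l<\omega_j$. *)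

From mathcomp Require Import all_boot.
Set Implicit Arguments. Unset Strict Implicit. Unset Printing Implicit Defensive.

Fixpoint stirling1 (n j : nat) : nat :=
  match n, j with
  | 0, 0 => 1
  | 0, _.+1 => 0
  | _.+1, 0 => 0
  | m.+1, i.+1 => m * stirling1 m i.+1 + stirling1 m i
  end.

Definition avoids010 (w : seq nat) : bool :=
  [forall i : 'I_(size w), forall j : 'I_(size w), forall l : 'I_(size w),
     ~~ [&& i < j, j < l, nth 0 w i == nth 0 w l & nth 0 w i < nth 0 w j]].

(* A_{n,k}: words of length n on alphabet {1..k} (letters are elements of
   'I_k.+1 required to be nonzero), avoiding 010, using every letter of
   {1..k}, with first letter k. *)
Definition A_set (n k : nat) : {set n.-tuple 'I_k.+1} :=
  [set w : n.-tuple 'I_k.+1 |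
     [&& all (fun x : 'I_k.+1 => 0 < x) w,
         avoids010 (map (@nat_of_ord _) w),
         all (fun c => c \in map (@nat_of_ord _) w) (iota 1 k) &
         nth 0 (map (@nat_of_ord _) w) 0 == k]].

From mathcomp Require Import all_boot zify.

Set Implicit Arguments.
Unset Strict Implicit.
Unset Printing Implicit Defensive.

(* Since 1 is the smallest letter and 010 is forbidden, all copies of 1 are adjacent: a
   larger letter between two 1s would form a 010.  Split A_{n+1,k} by the
   number of 1s.  If 1 is repeated, deleting one copy is a bijection onto A_{n,k}.  If 1
   occurs once, it is not the first letter (otherwise k = 1 and every letter is 1);
   deleting it and lowering every other letter by one gives a word of A_{n,k-1}, and
   conversely a 1 may be inserted after any of the first n letters, since a unique minimal
   letter lies in no 010.  Hence a_{n+1,k} = a_{n,k} + n a_{n,k-1}, which is the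
   recurrence of [n+1, n+2-k]. *)

Lemma cons_subseq_cons (T : eqType) (x y : T) (r s : seq T) :
  subseq (x :: r) (y :: s) = if x == y then subseq r s else subseq (x :: r) s.
Proof. by rewrite [LHS]/=; case: (x == y). Qed.

Lemma nth_subseq_drop (T : eqType) (x0 : T) (s r : seq T) k i :
  k <= i < size s -> subseq r (drop i.+1 s) -> subseq (nth x0 s i :: r) (drop k s).
Proof.
case/andP=> le_ki lt_is sub_r; set t := drop k s.
have lt_t : i - k < size t by rewrite size_drop; lia.
have -> : nth x0 s i = nth x0 t (i - k) by rewrite nth_drop subnKC.
have {}sub_r : subseq r (drop (i - k).+1 t).
  by rewrite drop_drop; have -> : (i - k).+1 + k = i.+1 by lia.
set x := nth x0 t _; rewrite -(cat_take_drop (i - k) t) (drop_nth x0 lt_t) -/x.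
by rewrite -[x :: r]cat0s cat_subseq ?sub0seq //= eqxx.
Qed.

Lemma subseq_cons_index (T : eqType) (x : T) (r s : seq T) :
  subseq (x :: r) s -> subseq r (drop (index x s).+1 s).
Proof.
by elim: s => //= y s IH; rewrite eq_sym; case: eqP => [_ | _ /IH]; rewrite ?drop0.
Qed.

Lemma subseq_drop_nth (T : eqType) (x0 x : T) (r s : seq T) k :
  subseq (x :: r) (drop k s) ->
  exists2 i, k <= i < size s & nth x0 s i = x /\ subseq r (drop i.+1 s).
Proof.
move=> sub; set t := drop k s in sub.
have x_t : x \in t by apply: (mem_subseq sub); rewrite mem_head.
exists (k + index x t); last split.
- by rewrite leq_addr /= -ltn_subRL -size_drop index_mem.
- by rewrite -nth_drop nth_index.
- by rewrite -addnS addnC -drop_drop; apply: subseq_cons_index.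
Qed.

Lemma subseq_squeeze (T : eqType) (x : T) (r u v : seq T) :
  sorted (fun a b => a != b) r ->
  subseq r (u ++ x :: x :: v) -> subseq r (u ++ x :: v).
Proof.
elim: u r => [|y u IH] [|z r] // r_neq; rewrite ?cat_cons !cons_subseq_cons; last first.
  by case: eqP => _; apply: IH => //; apply: path_sorted r_neq.
case: eqP => [eq_zx | _] //; subst z.
case: r r_neq => [|z' r /andP [ne_xz' _]]; rewrite ?sub0seq //.
by rewrite cons_subseq_cons eq_sym (negbTE ne_xz').
Qed.

Lemma rem_pivot (T : eqType) (x : T) (u v : seq T) :
  x \notin u -> rem x (u ++ x :: v) = u ++ v.
Proof.
elim: u => [|y u IH] /=; first by rewrite eqxx.
by rewrite inE negb_or eq_sym => /andP [/negbTE -> /IH ->].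
Qed.

Lemma exists_pivot (T : eqType) (x : T) (s : seq T) :
  x \in s -> exists (u v : seq T), x \notin u /\ s = u ++ x :: v.
Proof.
move=> x_s; exists (take (index x s) s), (drop (index x s).+1 s); split.
  by apply/negP => /index_ltn; rewrite ltnn.
by rewrite -drop_index // cat_take_drop.
Qed.

Definition ins (T : Type) (x : T) i (s : seq T) := take i s ++ x :: drop i s.

Definition dup (T : eqType) (x : T) (s : seq T) := ins x (index x s) s.

Lemma ins_pivot (T : Type) (x : T) (u v : seq T) : ins x (size u) (u ++ v) = u ++ x :: v.
Proof. by rewrite /ins take_size_cat // drop_size_cat. Qed.

Lemma dup_pivot (T : eqType) (x : T) (u v : seq T) :
  x \notin u -> dup x (u ++ x :: v) = u ++ x :: x :: v.
Proof. by move=> x_u; rewrite /dup index_pivot // ins_pivot. Qed.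

Lemma perm_ins (T : eqType) (x : T) i (s : seq T) : perm_eq (ins x i s) (x :: s).
Proof.
by rewrite /ins -[X in perm_eq _ (_ :: X)](cat_take_drop i s) -cat1s perm_catCA.
Qed.

Lemma avoids010P (w : seq nat) :
  reflect (forall a b, a < b -> ~~ subseq [:: a; b; a] w) (avoids010 w).
Proof.
apply: (iffP forallP) => [H a b lt_ab | H i]; last first.
  apply/forallP => j; apply/forallP => l; apply/negP.
  case/and4P=> lt_ij lt_jl /eqP eq_il /H /negP; apply.
  rewrite {2}eq_il -[X in subseq _ X]drop0.
  apply: nth_subseq_drop; first by rewrite ltn_ord.
  apply: nth_subseq_drop; first by rewrite lt_ij ltn_ord.
  by apply: nth_subseq_drop; rewrite ?lt_jl ?ltn_ord ?sub0seq.
apply/negP; rewrite -[w]drop0 => sub.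
have [i /andP [_ lt_iw] [w_i sub1]] := subseq_drop_nth 0 sub.
have [j /andP [lt_ij lt_jw] [w_j sub2]] := subseq_drop_nth 0 sub1.
have [l /andP [lt_jl lt_lw] [w_l _]] := subseq_drop_nth 0 sub2.
move: (H (Ordinal lt_iw)) => /forallP /(_ (Ordinal lt_jw)) /forallP /(_ (Ordinal lt_lw)).
by rewrite /= w_i w_j w_l eqxx lt_ab lt_ij lt_jl.
Qed.

Lemma avoids010_subseq (s t : seq nat) : subseq s t -> avoids010 t -> avoids010 s.
Proof.
move=> sub_st /avoids010P av_t; apply/avoids010P => a b /av_t.
by apply: contra => /subseq_trans; apply.
Qed.

Lemma avoids010_map (f : nat -> nat) (s : seq nat) :
  {in s &, {homo f : x y / x < y}} -> avoids010 (map f s) -> avoids010 s.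
Proof.
move=> f_homo /avoids010P av_fs; apply/avoids010P => a b lt_ab; apply/negP => sub.
have [a_s b_s] : a \in s /\ b \in s.
  by split; apply: (mem_subseq sub); rewrite !inE eqxx ?orbT.
by have /negP := av_fs _ _ (f_homo a b a_s b_s lt_ab); apply; apply: (map_subseq f sub).
Qed.

Lemma avoids010_map_succn (w : seq nat) : avoids010 (map succn w) = avoids010 w.
Proof.
apply/idP/idP; first by apply: avoids010_map => x y _ _.
rewrite -{1}[w](@map_id_in _ (predn \o succn)) // map_comp; apply: avoids010_map.
by move=> _ _ /mapP [x _ ->] /mapP [y _ ->].
Qed.

Lemma avoids010_dup (x : nat) (u v : seq nat) :
  avoids010 (u ++ x :: x :: v) = avoids010 (u ++ x :: v).
Proof.
apply/idP/idP; last first.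
  move/avoids010P=> av; apply/avoids010P => a b lt_ab; apply: contra (av a b lt_ab).
  by apply: subseq_squeeze; rewrite /= (ltn_eqF lt_ab) neq_ltn lt_ab orbT.
apply: avoids010_subseq; rewrite cat_subseq // /= eqxx; exact: subseq_cons.
Qed.

Lemma avoids010_insert_min (x : nat) (u v : seq nat) :
  all (fun y => x < y) (u ++ v) -> avoids010 (u ++ v) -> avoids010 (u ++ x :: v).
Proof.
move=> /allP x_min /avoids010P av; apply/avoids010P => a b lt_ab; apply/negP => sub.
have x_uv : x \notin u ++ v by apply/negP => /x_min; rewrite ltnn.
have x_once : count_mem x (u ++ x :: v) = 1.
  by move/count_memPn: x_uv; rewrite !count_cat /= eqxx; lia.
have mem_uxv y : y \in [:: a; b; a] -> y = x \/ x < y.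
  move/(mem_subseq sub); rewrite mem_cat inE orbCA -mem_cat.
  by case/orP => [/eqP | /x_min]; [left | right].
case: (mem_uxv a) => [|eq_ax | lt_xa]; first by rewrite mem_head.
  have := leq_count_subseq (pred1 x) sub.
  by rewrite x_once eq_ax /= eqxx; case: (b == x).
case: (mem_uxv b) => [|eq_bx | lt_xb]; rewrite ?inE ?eqxx ?orbT //; first lia.
have x_pat : x \notin [:: a; b; a] by rewrite !inE; lia.
move: x_uv; rewrite mem_cat negb_or => /andP [x_u _].
by have := subseq_rem x sub; rewrite rem_id // rem_pivot //; apply/negP/av.
Qed.

Lemma avoids010_ins_min x i (w : seq nat) :
  all (fun y => x < y) w -> avoids010 (ins x i w) = avoids010 w.
Proof.
move=> x_min; rewrite /ins; apply/idP/idP.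
  rewrite -{3}(cat_take_drop i w); apply: avoids010_subseq.
  exact: cat_subseq (subseq_refl _) (subseq_cons _ _).
by move=> av_w; apply: avoids010_insert_min; rewrite cat_take_drop.
Qed.

Lemma avoids010_min_block (x : nat) (u v : seq nat) :
  avoids010 (u ++ x :: v) -> all (fun y => x <= y) v -> x \in v -> v = x :: behead v.
Proof.
case: v => [|y v] //= /avoids010P av /andP [le_xy _]; rewrite inE eq_sym.
case: (eqVneq y x) => [-> // | ne_yx] /= x_v.
have lt_xy : x < y by rewrite ltn_neqAle eq_sym ne_yx.
case/negP: (av x y lt_xy); rewrite -[[:: x; y; x]]cat0s cat_subseq ?sub0seq //.
by rewrite !cons_subseq_cons !eqxx sub1seq.
Qed.

Definition A_word n k (s : seq nat) :=
  [&& size s == n, all (fun x => 0 < x <= k) s, avoids010 s,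
      all [in s] (iota 1 k) & head 0 s == k].

Lemma A_word_gt0 n k s : A_word n.+1 k s -> 0 < k.
Proof. by case: s => [|x s] /and5P [] // _ /andP [/andP [x_gt0 _] _] _ _ /eqP <-. Qed.

Lemma A_word1 k s : A_word 1 k s = (k == 1) && (s == [:: 1]).
Proof.
apply/idP/andP => [As | [/eqP -> /eqP ->]]; last first.
  rewrite /A_word /= andbT; apply/avoids010P => a b _.
  by apply/negP => /size_subseq.
have k_gt0 := A_word_gt0 As.
case/and5P: As => /eqP size_s _ _ /allP s_cover /eqP head_s.
have := s_cover 1 ltac:(rewrite mem_iota; lia).
by case: s size_s head_s {s_cover} => [|a [|]] //= _ <-; rewrite inE => /eqP ->.
Qed.

Lemma A_word_dup x n k (u v : seq nat) :
  A_word n.+1 k (u ++ x :: x :: v) = A_word n k (u ++ x :: v).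
Proof.
have mem_dup : u ++ x :: x :: v =i u ++ x :: v.
  by move=> y; rewrite !mem_cat !inE; case: (y == x); rewrite ?orbT.
rewrite /A_word !size_cat /= addnS eqSS (eq_all_r mem_dup) avoids010_dup.
by rewrite (@eq_all _ [in u ++ x :: x :: v] [in u ++ x :: v]) //; case: u {mem_dup}.
Qed.

Lemma A_word_rem_repeated n k s :
  A_word n.+1 k s -> 1 < count_mem 1 s -> A_word n k (rem 1 s) /\ dup 1 (rem 1 s) = s.
Proof.
move=> As one_twice; have one_s : 1 \in s by rewrite -has_pred1 has_count; lia.
have [u [v [one_u def_s]]] := exists_pivot one_s.
have one_v : 1 \in v.
  move: one_twice; rewrite def_s count_cat (count_memPn one_u) /= add1n ltnS.
  by rewrite -has_pred1 has_count.
have def_v : v = 1 :: behead v.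
  case/and5P: As => _ /allP s_pos av_s _ _; rewrite def_s in av_s.
  apply: avoids010_min_block av_s _ one_v; apply/allP => y y_v.
  by have /s_pos /andP [] : y \in s by rewrite def_s mem_cat inE y_v !orbT.
move: As; rewrite def_s def_v rem_pivot // dup_pivot // A_word_dup.
by split.
Qed.

Lemma A_word_dup_repeated n k t : 0 < k -> A_word n k t ->
  [/\ A_word n.+1 k (dup 1 t), 1 < count_mem 1 (dup 1 t) & rem 1 (dup 1 t) = t].
Proof.
move=> k_gt0 At; have one_t : 1 \in t.
  by case/and5P: At => _ _ _ /allP -> //; rewrite mem_iota; lia.
have [u [v [one_u def_t]]] := exists_pivot one_t; rewrite def_t in At *.
rewrite dup_pivot // rem_pivot // A_word_dup At count_cat /=; split => //; lia.
Qed.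

Lemma A_word_ins_succ n k i (w : seq nat) : 0 < k -> 0 < i -> all (fun y => 0 < y) w ->
  A_word n.+1 k (ins 1 i (map succn w)) = A_word n k.-1 w.
Proof.
move=> k_gt0 i_gt0 /allP w_pos.
have perm_s : perm_eq (ins 1 i (map succn w)) (1 :: map succn w) by apply: perm_ins.
have succ_gt1 : all (fun y => 1 < y) (map succn w).
  by rewrite all_map; apply/allP => y /w_pos.
rewrite /A_word (perm_size perm_s) (perm_all _ perm_s) /= size_map eqSS all_map k_gt0.
rewrite avoids010_ins_min // avoids010_map_succn; congr [&& _, _, _, _ & _].
- by apply/eq_in_all => y /w_pos /= y_gt0; apply/idP/idP; lia.
- have -> : iota 1 k = 1 :: map succn (iota 1 k.-1).
    by rewrite -[in LHS](prednK k_gt0) /= -[2]/(1 + 1) iotaDl.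
  rewrite /= (perm_mem perm_s) mem_head all_map /=.
  apply/eq_in_all => c; rewrite mem_iota => /andP [c_gt0 _] /=.
  by rewrite (perm_mem perm_s) inE (mem_map succn_inj); case: c c_gt0.
- rewrite -(prednK i_gt0).
  by case: w {w_pos perm_s succ_gt1} => [|y w] /=; apply/eqP/eqP; lia.
Qed.

Lemma A_word_single_gt1 n k s : 0 < n -> A_word n.+1 k s -> count_mem 1 s <= 1 -> 1 < k.
Proof.
move=> n_gt0 As one_once; rewrite ltn_neqAle eq_sym (A_word_gt0 As) andbT.
apply: contraTneq one_once => k1; case/and5P: As => /eqP size_s /allP s_letters _ _ _.
have /eqP -> : count_mem 1 s == size s.
  by rewrite -all_count; apply/allP => x /s_letters /=; rewrite k1 => ?; apply/eqP; lia.
by rewrite size_s -ltnNge ltnS.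
Qed.

Lemma A_word_rem_single n k s : 0 < n -> A_word n.+1 k s -> count_mem 1 s <= 1 ->
  [/\ 0 < index 1 s <= n, A_word n k.-1 (map predn (rem 1 s))
    & ins 1 (index 1 s) (map succn (map predn (rem 1 s))) = s].
Proof.
move=> n_gt0 As one_once; have k_gt1 := A_word_single_gt1 n_gt0 As one_once.
case/and5P: (As) => /eqP size_s /allP s_letters _ /allP s_cover /eqP head_s.
have [u [v [one_u def_s]]] := exists_pivot (s_cover 1 ltac:(rewrite mem_iota; lia)).
have one_v : 1 \notin v.
  apply/count_memPn; move: one_once.
  by rewrite def_s count_cat (count_memPn one_u) /= add1n ltnS leqn0 => /eqP.
have uv_gt1 : all (fun y => 1 < y) (u ++ v).
  apply/allP => y y_uv.
  have y_ne1 : y != 1 by apply: contraTneq y_uv => ->; rewrite mem_cat negb_or one_u.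
  have /s_letters /andP [y_gt0 _] : y \in s.
    by rewrite def_s mem_cat inE orbCA -mem_cat y_uv orbT.
  by rewrite ltn_neqAle eq_sym y_ne1.
have succ_pred : map succn (map predn (u ++ v)) = u ++ v.
  by rewrite -map_comp map_id_in // => y /(allP uv_gt1) /= y_gt1; rewrite prednK // ltnW.
have u_gt0 : 0 < size u.
  by case: u {one_u uv_gt1 succ_pred} def_s => // def_s; rewrite -head_s def_s in k_gt1.
rewrite def_s index_pivot // rem_pivot // succ_pred ins_pivot; split => //.
  by rewrite u_gt0; move: size_s; rewrite def_s size_cat addnS => -[<-]; apply: leq_addr.
have pred_pos : all (fun y => 0 < y) (map predn (u ++ v)).
  by rewrite all_map; apply/allP => y /(allP uv_gt1) /=; lia.
by rewrite -(A_word_ins_succ n (ltnW k_gt1) u_gt0 pred_pos) succ_pred ins_pivot -def_s.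
Qed.

Lemma A_word_ins_single n k p t : 0 < k -> p < n -> A_word n k.-1 t ->
  let s := ins 1 p.+1 (map succn t) in
  [/\ A_word n.+1 k s, count_mem 1 s <= 1, index 1 s = p.+1 & map predn (rem 1 s) = t].
Proof.
move=> k_gt0 lt_pn At s.
case/and5P: (At) => /eqP size_t /allP t_letters _ _ _.
have t_pos : all (fun y => 0 < y) t by apply/allP => y /t_letters /andP [].
have one_t : 1 \notin map succn t.
  by apply/mapP => -[y /t_letters /andP [y_gt0 _] /eqP]; rewrite eqSS eq_sym; lia.
have one_take : 1 \notin take p.+1 (map succn t) by apply: contra one_t; apply: mem_take.
split.
- by rewrite A_word_ins_succ.
- by rewrite (permP (perm_ins _ _ _)) /= (count_memPn one_t).
- by rewrite /s /ins index_pivot // size_takel // size_map size_t.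
- by rewrite /s /ins rem_pivot // cat_take_drop -map_comp map_id.
Qed.

(* The all-zero word when [size s != n]. *)
Definition word n k (s : seq nat) : n.-tuple 'I_k.+1 :=
  insubd (nseq_tuple n ord0) (map inord s).

Lemma wordK n k (w : n.-tuple 'I_k.+1) : word n k (map val w) = w.
Proof.
apply: val_inj; rewrite /word val_insubd !size_map size_tuple eqxx -map_comp.
by rewrite map_id_in // => x _ /=; rewrite inord_val.
Qed.

Lemma mem_A_set n k (w : n.-tuple 'I_k.+1) : (w \in A_set n k) = A_word n k (map val w).
Proof.
rewrite inE /A_word size_map size_tuple eqxx all_map /=; congr (_ && _).
by apply/eq_all => x /=; rewrite -[x <= k]ltnS ltn_ord andbT.
Qed.

Lemma A_word_word n k s :
  A_word n k s -> word n k s \in A_set n k /\ map val (word n k s) = s.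
Proof.
move=> As; suff val_s : map val (word n k s) = s by rewrite mem_A_set val_s.
case/and5P: As => /eqP size_s /allP s_letters _ _ _.
rewrite /word val_insubd size_map size_s eqxx -map_comp map_id_in // => x /s_letters.
by case/andP => _ le_xk /=; rewrite inordK.
Qed.

Lemma card_in_bij (U V : finType) (X : {set U}) (Y : {set V}) (f : U -> V) (g : V -> U) :
  {in X, forall x, f x \in Y /\ g (f x) = x} ->
  {in Y, forall y, g y \in X /\ f (g y) = y} ->
  #|X| = #|Y|.
Proof.
move=> fX gY; rewrite -(card_in_imset (f := f)); last first.
  by move=> x1 x2 /fX [_ fK1] /fX [_ fK2] eq_f; rewrite -fK1 -fK2 eq_f.
suff -> : f @: X = Y by [].
apply/setP => y; apply/imsetP/idP => [[x /fX [fxY _] ->] // | /gY [gyX fgy]].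
by exists (g y).
Qed.

Definition repeated_one n k : {set n.-tuple 'I_k.+1} :=
  [set w : n.-tuple 'I_k.+1 | 1 < count_mem 1 (map val w)].

Lemma card_A_set_repeated_one n k : 0 < k ->
  #|A_set n.+1 k :&: repeated_one n.+1 k| = #|A_set n k|.
Proof.
move=> k_gt0; apply: (card_in_bij
  (f := fun w : n.+1.-tuple 'I_k.+1 => word n k (rem 1 (map val w)))
  (g := fun t : n.-tuple 'I_k.+1 => word n.+1 k (dup 1 (map val t)))).
- move=> w; rewrite in_setI mem_A_set inE => /andP [Aw rep_w].
  have [At dupK] := A_word_rem_repeated Aw rep_w.
  by have [-> ->] := A_word_word At; rewrite dupK wordK.
- move=> t; rewrite mem_A_set => At.
  have [Ad rep_d remK] := A_word_dup_repeated k_gt0 At.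
  have [Ad_in val_d] := A_word_word Ad.
  by rewrite in_setI Ad_in inE val_d rep_d remK wordK.
Qed.

Lemma card_A_set_single_one n k : 0 < n -> 0 < k ->
  #|A_set n.+1 k :\: repeated_one n.+1 k| = n * #|A_set n k.-1|.
Proof.
case: n => // n n_gt0 k_gt0; rewrite -[X in X * _](card_ord n.+1) -cardsT -cardsX.
apply: (card_in_bij
  (f := fun w : n.+2.-tuple 'I_k.+1 =>
          (inord (index 1 (map val w)).-1, word n.+1 k.-1 (map predn (rem 1 (map val w)))))
  (g := fun pt : 'I_n.+1 * n.+1.-tuple 'I_k.-1.+1 =>
          word n.+2 k (ins 1 (val pt.1).+1 (map succn (map val pt.2))))).
- move=> w; rewrite in_setD mem_A_set inE -leqNgt => /andP [one_once Aw].
  have [/andP [i_gt0 le_in] At insK] := A_word_rem_single n_gt0 Aw one_once.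
  have lt_i : (index 1 (map val w)).-1 < n.+1 by rewrite prednK.
  have [At_in val_t] := A_word_word At.
  by rewrite in_setX in_setT At_in val_t /= inordK // prednK // insK wordK.
- case=> p t; rewrite in_setX in_setT /= mem_A_set => At.
  have [As one_once indexK remK] := A_word_ins_single k_gt0 (ltn_ord p) At.
  have [As_in val_s] := A_word_word As.
  rewrite in_setD As_in inE val_s -leqNgt one_once indexK remK wordK.
  by split => //; congr (_, _); apply: val_inj; rewrite /= inordK.
Qed.

Lemma card_A_set_rec n k : 0 < n -> 0 < k ->
  #|A_set n.+1 k| = #|A_set n k| + n * #|A_set n k.-1|.
Proof.
move=> n_gt0 k_gt0.
by rewrite -(cardsID (repeated_one n.+1 k)) card_A_set_repeated_one // card_A_set_single_one.
Qed.

Lemma card_A_set0 n : 0 < n -> #|A_set n 0| = 0.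
Proof.
by case: n => // n _; apply: eq_card0 => w; rewrite mem_A_set; apply/negP => /A_word_gt0.
Qed.

Lemma card_A_set1 k : #|A_set 1 k| = (k == 1).
Proof.
case: (eqVneq k 1) => [-> | k_ne1]; last first.
  by apply: eq_card0 => w; rewrite mem_A_set A_word1 (negbTE k_ne1).
have [_ val_1] := @A_word_word 1 1 [:: 1] ltac:(by rewrite A_word1).
suff -> : A_set 1 1 = [set word 1 1 [:: 1]] by rewrite cards1.
apply/setP => w.
rewrite mem_A_set A_word1 !inE; apply/eqP/eqP => [val_w | ->] //.
by rewrite -[w]wordK val_w.
Qed.

Lemma stirling1_eq0 n j : n < j -> stirling1 n j = 0.
Proof. by elim: n j => [|n IH] [|j] //= lt_nj; rewrite !IH //; lia. Qed.

Lemma stirling1_diag_rec n k : 0 < n -> 0 < k ->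
  stirling1 n.+1 (n.+2 - k) = stirling1 n (n.+1 - k) + n * stirling1 n (n.+2 - k).
Proof.
move=> n_gt0 k_gt0; case: (leqP k n.+1) => [le_kn | lt_nk].
  by rewrite (subSn le_kn) /= addnC.
have -> : n.+2 - k = 0 by lia.
have -> : n.+1 - k = 0 by lia.
by rewrite -(prednK n_gt0) /= muln0.
Qed.

Theorem mainTheorem1 (n k : nat) : 1 <= n -> 1 <= k ->
  #|A_set n k| = stirling1 n (n.+1 - k).
Proof.
elim: n k => [//|n IH] k _ k_gt0.
have [-> | n_gt0] := posnP n; first by rewrite card_A_set1; case: k k_gt0 => [|[|k]].
rewrite card_A_set_rec // stirling1_diag_rec // IH //; congr (_ + n * _).
case: k k_gt0 => [|[|k]] // _; last by rewrite IH.
by rewrite card_A_set0 // stirling1_eq0.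
Qed.
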